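(* Let $t$ be a positive integer and let $G$ be a graph on $4t-1$ vertices with $\alpha(G)=2$. If $\mathrm{cm}(G)\le t-1$, then $\omega(G)\le t-4$.
   Context: All graphs are finite and simple. $\alpha(G)$ is the independence number and $\omega(G)$ the clique number. A matching $M$ in $G$ is connected if for every two edges of $M$ there is an edge of $G$ joining an endpoint of one to an endpoint of the other; $\mathrm{cm}(G)$ is the maximum size of a connected matching in $G$. *)

From mathcomp Require Import all_boot all_order all_algebra.
Set Implicit Arguments. Unset Strict Implicit. Unset Printing Implicit Defensive.

Definition simple_graph (T : finType) (e : rel T) : Prop :=
  symmetric e /\ irreflexive e.

Section Graph.
Variables (T : finType) (e : rel T).

Definition is_stable (S : {set T}) : bool :=
  [forall x in S, forall y in S, ~~ e x y].

Definition is_clique (S : {set T}) : bool :=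
  [forall x in S, forall y in S, (x != y) ==> e x y].

Definition alpha : nat := \max_(S : {set T} | is_stable S) #|S|.
Definition omega : nat := \max_(S : {set T} | is_clique S) #|S|.

Definition is_edge_set (f : {set T}) : bool :=
  [exists x, exists y, (e x y) && (f == [set x; y])].

Definition is_matching (M : {set {set T}}) : bool :=
  [forall f in M, is_edge_set f] &&
  [forall f in M, forall g in M, (f != g) ==> [disjoint f & g]].

Definition is_connected_matching (M : {set {set T}}) : bool :=
  is_matching M &&
  [forall f in M, forall g in M,
     (f != g) ==> [exists x in f, exists y in g, e x y]].

Definition cm : nat := \max_(M : {set {set T}} | is_connected_matching M) #|M|.

End Graph.

(* Assume omega >= t - 3; we build a connected matching with t edges.  As
   alpha = 2, the non-neighbours of a vertex form a clique, so no vertex has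
   more than omega non-neighbours.  The vertices of a clique A can therefore
   be given distinct partners outside A greedily, as long as each has |A|
   admissible partners, and the resulting edges are pairwise joined through A.
   If omega >= t this matches t vertices of a maximum clique K.  Otherwise take
   non-adjacent u, w outside K and, among their at least omega + 3 common
   neighbours outside K, an edge xy with a non-neighbour y1 of x and y2 of y:
   then uy1, wy2, xy is a connected matching, and by alpha = 2 every vertex of
   K misses both ends of at most one of these edges, so that t - 3 vertices of
   K can be matched on top of it. *)

From mathcomp Require Import all_boot all_order all_algebra zify.

Set Implicit Arguments.
Unset Strict Implicit.
Unset Printing Implicit Defensive.

Lemma exists_subset_card (T : finType) (A : {set T}) m :
  m <= #|A| -> exists2 B : {set T}, B \subset A & #|B| = m.
Proof.
move=> le_mA; exists [set x in take m (enum A)].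
  by apply/subsetP => x; rewrite inE => /mem_take; rewrite mem_enum.
by rewrite cardsE (card_uniqP (take_uniq _ (enum_uniq _))) size_takel -?cardE.
Qed.

Section Graph.
Variables (T : finType) (e : rel T).
Hypothesis e_sym : symmetric e.

Definition linked (f g : {set T}) : bool :=
  [exists x in f, exists y in g, e x y].

Lemma linkedC f g : linked f g = linked g f.
Proof.
by apply/exists_inP/exists_inP => -[x xf /exists_inP[y yg exy]];
  exists y => //; apply/exists_inP; exists x; rewrite // e_sym.
Qed.

Lemma linked_edge (f g : {set T}) x y :
  x \in f -> y \in g -> e x y -> linked f g.
Proof.
by move=> xf yg exy; apply/exists_inP; exists x => //; apply/exists_inP; exists y.
Qed.

Lemma linked_set2 a b c d :
  linked [set a; b] [set c; d] = [|| e a c, e a d, e b c | e b d].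
Proof.
apply/idP/idP => [/exists_inP[v /set2P[]-> /exists_inP[z /set2P[]-> ->]] | ];
  rewrite ?orbT // => /or4P[] exy;
  by apply: (linked_edge _ _ exy); rewrite ?set21 ?set22.
Qed.

Lemma sub_clique (A B : {set T}) : B \subset A -> is_clique e A -> is_clique e B.
Proof.
move=> /subsetP sBA /forall_inP clA; apply/forall_inP => x xB.
by apply/forall_inP => y yB; apply: (forall_inP (clA x (sBA x xB))); apply: sBA.
Qed.

Lemma clique_edge (K : {set T}) x y :
  is_clique e K -> x \in K -> y \in K -> x != y -> e x y.
Proof. by move=> /forall_inP clK xK yK; apply/implyP; apply: (forall_inP (clK x xK)). Qed.

Lemma clique_card_le_omega (K : {set T}) : is_clique e K -> #|K| <= omega e.
Proof. exact: (@leq_bigmax_cond _ (is_clique e) (fun K => #|K|)). Qed.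

Lemma exists_max_clique : exists2 K : {set T}, is_clique e K & #|K| = omega e.
Proof.
have cliques_gt0 : 0 < #|[pred K : {set T} | is_clique e K]|.
  by apply/card_gt0P; exists set0; apply/forall_inP => x; rewrite inE.
have [K clK omegaK] := eq_bigmax_cond (fun K : {set T} => #|K|) cliques_gt0.
by exists K; rewrite // /omega omegaK.
Qed.

Lemma card_gt_omega_nonadj (A : {set T}) : omega e < #|A| ->
  exists x y, [/\ x \in A, y \in A, x != y & ~~ e x y].
Proof.
move=> ltA; have /forall_inPn[x xA /forall_inPn[y yA]] : ~~ is_clique e A.
  by apply: contraTN ltA => /clique_card_le_omega; rewrite leqNgt.
by rewrite negb_imply => /andP[nxy nexy]; exists x, y.
Qed.

Lemma connected_matching_le_cm M : is_connected_matching e M -> #|M| <= cm e.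
Proof. exact: (@leq_bigmax_cond _ (is_connected_matching e) (fun M => #|M|)). Qed.

Lemma connected_matching0 : is_connected_matching e set0.
Proof. by apply/andP; split; [apply/andP; split|]; apply/forall_inP => f; rewrite inE. Qed.

Lemma cover0 : cover (set0 : {set {set T}}) = set0.
Proof. by rewrite /cover big_set0. Qed.

Lemma cover_add a b (M : {set {set T}}) : cover ([set a; b] |: M) = [set a; b] :|: cover M.
Proof. by rewrite /cover bigcup_setU big_set1. Qed.

Lemma sub_cover f (M : {set {set T}}) : f \in M -> f \subset cover M.
Proof. exact: bigcup_sup. Qed.

Lemma disjoint_set2 a b (A : {set T}) :
  [disjoint [set a; b] & A] = (a \notin A) && (b \notin A).
Proof. by rewrite disjoints_subset subUset !sub1set !inE. Qed.

Lemma card_cover_matching M : is_matching e M -> #|cover M| <= 2 * #|M|.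
Proof.
case/andP => /forall_inP edgeM _; rewrite mulnC -sum_nat_const.
apply: leq_trans (leq_card_cover M).1 _; apply: leq_sum => f /edgeM.
by case/existsP => x /existsP[y /andP[_ /eqP->]]; rewrite cards2; case: (x != y).
Qed.

Section AddEdge.
Variables (M : {set {set T}}) (a b : T).
Hypothesis fresh_ab : [disjoint [set a; b] & cover M].

Lemma card_add_edge : #|[set a; b] |: M| = #|M|.+1.
Proof.
suff abM : [set a; b] \notin M by rewrite cardsU1 abM.
apply: contraFN (disjointFr fresh_ab (set21 a b)) => abM.
exact: subsetP (sub_cover abM) _ (set21 a b).
Qed.

Lemma connected_matching_add : is_connected_matching e M -> e a b ->
  {in M, forall f, linked [set a; b] f} -> is_connected_matching e ([set a; b] |: M).
Proof.
case/andP => /andP[/forall_inP edgeM /forall_inP disjM] /forall_inP connM eab linkM.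
have disj_ab f : f \in M -> [disjoint [set a; b] & f].
  by move=> fM; apply: disjointWr (sub_cover fM) fresh_ab.
have edge_ab : is_edge_set e [set a; b].
  by apply/existsP; exists a; apply/existsP; exists b; rewrite eab eqxx.
apply/andP; split; first (apply/andP; split).
- by apply/forall_inP => f /setU1P[->|/edgeM].
- apply/forall_inP => f /setU1P[->|fM]; apply/forall_inP => g /setU1P[->|gM];
    rewrite ?eqxx //.
  + by rewrite disj_ab ?implybT.
  + by rewrite disjoint_sym disj_ab ?implybT.
  + exact: (forall_inP (disjM f fM)).
- apply/forall_inP => f /setU1P[->|fM]; apply/forall_inP => g /setU1P[->|gM];
    rewrite ?eqxx //.
  + by apply/implyP => _; apply: linkM.
  + by apply/implyP => _; move: (linkM f fM); rewrite linkedC.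
  + exact: (forall_inP (connM f fM)).
Qed.
End AddEdge.

(* Match some a0 to some z0 in C a0, then recurse on A :\ a0 with z0 removed
   from every C a; the clique A joins the edge {a0, z0} to all later ones. *)
Lemma clique_extension_le_cm (A : {set T}) (C : T -> {set T}) M :
  is_clique e A -> is_connected_matching e M -> {in A, forall a, a \notin cover M} ->
  {in A, forall a, {in C a, forall z, [&& e a z, z \notin A & z \notin cover M]}} ->
  {in A, forall a, {in C a & M, forall z f, linked [set a; z] f}} ->
  {in A, forall a, #|A| <= #|C a|} ->
  #|M| + #|A| <= cm e.
Proof.
have [n] := ubnP #|A|; elim: n A C M => // n IH A C M /ltnSE leAn.
move=> clA Mcm AM Cadj Clink Ccard.
have [A0 | [a0 a0A]] := set_0Vmem A.
  by rewrite A0 cards0 addn0; apply: connected_matching_le_cm.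
have cardA : #|A| = #|A :\ a0|.+1 by rewrite (cardsD1 a0) a0A.
have [z0 z0C] : exists z0, z0 \in C a0.
  by apply/card_gt0P; apply: leq_trans (Ccard a0 a0A); rewrite cardA.
have /and3P[ea0z0 z0A z0M] := Cadj a0 a0A z0 z0C.
have fresh0 : [disjoint [set a0; z0] & cover M] by rewrite disjoint_set2 AM.
have M1cm : is_connected_matching e ([set a0; z0] |: M).
  by apply: connected_matching_add => // f; apply: Clink.
have notin_cover1 z : z != a0 -> z != z0 -> z \notin cover M ->
    z \notin cover ([set a0; z0] |: M).
  by move=> za0 zz0 zM; rewrite cover_add !inE !negb_or za0 zz0.
have := IH (A :\ a0) (fun a => C a :\ z0) _ _ _ M1cm.
rewrite card_add_edge // cardA addSnnS; apply.
- by rewrite -ltnS -cardA.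
- exact: sub_clique (subD1set A a0) clA.
- move=> a /setD1P[aa0 aA]; apply: notin_cover1; rewrite ?AM //.
  by apply: contraNneq z0A => <-.
- move=> a /setD1P[_ aA] z /setD1P[zz0 zC]; have /and3P[-> zA zM] := Cadj a aA z zC.
  rewrite !inE negb_and zA orbT /= notin_cover1 //.
  by apply: contraNneq zA => ->.
- move=> a /setD1P[aa0 aA] z f /setD1P[_ zC] /setU1P[->|fM]; last exact: Clink.
  by apply: (@linked_edge _ _ a a0); rewrite ?set21 // (clique_edge clA).
- move=> a /setD1P[_ aA]; have := Ccard a aA.
  by rewrite cardA (cardsD1 z0 (C a)); case: (z0 \in C a) => /= ?; lia.
Qed.

Definition nonadj v : {set T} := [set z | (z != v) && ~~ e v z].

Lemma adj_of_notin_nonadj v z : z != v -> z \notin nonadj v -> e v z.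
Proof. by move=> zv; rewrite inE zv negbK. Qed.

Section Alpha2.
Hypothesis e_irr : irreflexive e.
Hypothesis alpha2 : alpha e = 2.

Lemma alpha2_nonadj_edge a p q :
  a != p -> a != q -> p != q -> ~~ e a p -> ~~ e a q -> e p q.
Proof.
move=> ap aq pq nap naq; apply/negPn/negP => npq.
have stable3 : is_stable e (a |: [set p; q]).
  apply/forall_inP => v; rewrite !inE => /or3P[]/eqP->;
  apply/forall_inP => v'; rewrite !inE => /or3P[]/eqP->;
  by rewrite ?e_irr // ?(e_sym p a) ?(e_sym q a) ?(e_sym q p).
have := @leq_bigmax_cond _ (is_stable e) (fun S => #|S|) _ stable3.
by rewrite -/(alpha e) alpha2 cardsU1 cards2 !inE negb_or ap aq pq.
Qed.

Lemma nonadj_clique v : is_clique e (nonadj v).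
Proof.
apply/forall_inP => p; rewrite inE => /andP[pv nvp].
apply/forall_inP => q; rewrite inE => /andP[qv nvq].
by apply/implyP => pq; apply: (@alpha2_nonadj_edge v); rewrite // eq_sym.
Qed.

Lemma card_nonadj v : #|nonadj v| <= omega e.
Proof. exact/clique_card_le_omega/nonadj_clique. Qed.

Lemma edge_with_nonadj_ends (B : {set T}) : omega e + 3 <= #|B| ->
  exists x y y1 y2, [/\ [/\ x \in B, y \in B, y1 \in B & y2 \in B],
    [/\ e x y, ~~ e x y1 & ~~ e y y2] &
    [/\ x != y1, x != y2, y != y1, y != y2 & y1 != y2]].
Proof.
move=> leB; have [p [q [pB qB pq npq]]] := @card_gt_omega_nonadj B ltac:(lia).
have [r [s [rB sB rs nrs]]] : exists r s, [/\ r \in B :\ p :\ q, s \in B :\ p :\ q,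
    r != s & ~~ e r s].
  apply: card_gt_omega_nonadj; move: leB.
  rewrite (cardsD1 p) (cardsD1 q (B :\ p)) pB !inE qB (eq_sym q) pq /=; lia.
move: rB sB; rewrite !inE => /and3P[rq rp rB] /and3P[sq sp sB].
have [erp | nerp] := boolP (e r p).
  exists p, r, q, s; split => //.
    by split; rewrite // e_sym.
  by split => //; rewrite eq_sym.
have erq : e r q by apply: contraNT npq => nerq; apply: (@alpha2_nonadj_edge r).
exists q, r, p, s; split => //.
  by split; rewrite // e_sym.
by split => //; rewrite eq_sym.
Qed.

Lemma card_common_nbh_outside (K : {set T}) u w : u != w -> ~~ e u w ->
  #|T| <= #|K| + 2 * omega e + #|[set z | e u z & e w z] :\: K|.
Proof.
move=> uw nuw; set B := _ :\: K.
have sub : ~: B \subset K :|: nonadj u :|: nonadj w.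
  apply/subsetP => z; rewrite !inE negb_and negbK negb_and => /or3P[-> // | nuz | nwz].
    case: (eqVneq z u) => [-> | zu]; first by rewrite uw (e_sym w u) nuw orbT.
    by rewrite nuz /= orbT.
  case: (eqVneq z w) => [-> | zw]; first by rewrite eq_sym uw nuw orbT.
  by rewrite nwz /= orbT.
have := subset_leq_card sub; have := cardsC B.
have := (leq_card_setU (K :|: nonadj u) (nonadj w)).1.
have := (leq_card_setU K (nonadj u)).1.
have := card_nonadj u; have := card_nonadj w; lia.
Qed.

Lemma large_clique_le_cm t : t <= omega e -> 4 * t <= #|T|.+1 -> t <= cm e.
Proof.
move=> le_t_omega le_n; have [K clK cardK] := exists_max_clique.
have [A sAK cardA] := @exists_subset_card _ K t ltac:(by rewrite cardK).
have := @clique_extension_le_cm A (fun a => ~: (nonadj a :|: A)) set0.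
rewrite cards0 cardA; apply; rewrite ?cover0.
- exact: sub_clique sAK clK.
- exact: connected_matching0.
- by move=> a _; rewrite inE.
- move=> a aA z; rewrite in_setC in_setU negb_or => /andP[zNa zA].
  rewrite zA in_set0 andbT; apply: adj_of_notin_nonadj zNa.
  by apply: contraNneq zA => ->.
- by move=> a _ z f _; rewrite inE.
move=> a aA; have aK := subsetP sAK a aA.
(* nonadj a misses K, so there are at least max(n - omega - t, omega - t) >= t
   admissible partners. *)
have sub_nonadj : nonadj a :|: A \subset ~: (K :\: A).
  apply/subsetP => z; rewrite !inE negb_and negbK => /orP[/andP[za nez] | ->//].
  by apply/orP; right; apply: contra nez => zK; rewrite (clique_edge clK) // eq_sym.
have := subset_leq_card sub_nonadj; have := (leq_card_setU (nonadj a) A).1.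
have := cardsC (nonadj a :|: A); have := cardsC (K :\: A).
rewrite cardsD (setIidPr sAK) cardK cardA; have := card_nonadj a; lia.
Qed.

Section ThreeEdges.
Variables u w x y y1 y2 : T.
Hypotheses (euy1 : e u y1) (ewy2 : e w y2) (exy : e x y).
Hypotheses (ey2u : e y2 u) (exu : e x u) (exw : e x w).
Hypotheses (nuw : ~~ e u w) (nxy1 : ~~ e x y1) (nyy2 : ~~ e y y2).
Hypothesis fresh_wy2 : [disjoint [set w; y2] & [set u; y1]].
Hypothesis fresh_xy : [disjoint [set x; y] & [set w; y2] :|: [set u; y1]].

Definition three_edges : {set {set T}} :=
  [set x; y] |: ([set w; y2] |: [set [set u; y1]]).

Lemma cover_three_edges :
  cover three_edges = [set x; y] :|: ([set w; y2] :|: [set u; y1]).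
Proof. by rewrite !cover_add cover1. Qed.

Lemma three_edges_connected_matching :
  is_connected_matching e three_edges /\ #|three_edges| = 3.
Proof.
rewrite /three_edges -[[set [set u; y1]]]setU0.
have fresh_uy1 : [disjoint [set u; y1] & cover set0] by rewrite cover0 disjoint_set2 !inE.
have fresh_wy2' : [disjoint [set w; y2] & cover ([set u; y1] |: set0)].
  by rewrite cover_add cover0 setU0.
have fresh_xy' : [disjoint [set x; y] & cover ([set w; y2] |: ([set u; y1] |: set0))].
  by rewrite !cover_add cover0 setU0.
split; last by rewrite !card_add_edge ?cards0.
apply: connected_matching_add => //; last first.
  by move=> f; rewrite !inE orbF => /orP[]/eqP->; rewrite linked_set2 ?exw ?exu.
apply: connected_matching_add => //; last first.
  by move=> f; rewrite !inE orbF => /eqP->; rewrite linked_set2 ey2u !orbT.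
apply: connected_matching_add => //; last by move=> f; rewrite inE.
exact: connected_matching0.
Qed.

(* By alpha = 2, at most one edge of three_edges has both ends non-adjacent to a;
   the anchor is u, w or x on that edge.  Any partner z of a adjacent to the
   anchor links {a, z} to all three edges. *)
Definition three_edges_anchor a : T :=
  if ~~ e a u && ~~ e a y1 then u else if ~~ e a w && ~~ e a y2 then w else x.

Lemma three_edges_linked a z :
  a \notin cover three_edges -> z \notin cover three_edges ->
  z \notin nonadj (three_edges_anchor a) -> {in three_edges, forall f, linked [set a; z] f}.
Proof.
move=> aP zP zNanchor.
have anchor_z : e (three_edges_anchor a) z.
  apply: adj_of_notin_nonadj zNanchor; apply: contraNneq zP => ->.
  rewrite cover_three_edges /three_edges_anchor.
  by do 2?case: ifP => _; rewrite !inE eqxx ?orbT.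
move: aP fresh_wy2 fresh_xy; rewrite cover_three_edges !disjoint_set2 !inE !negb_or.
move=> /and3P[/andP[ax ay] /andP[aw ay2] /andP[au ay1]].
move=> /andP[/andP[wu _] _] /andP[/andP[_ /andP[_ xy1]] /andP[/andP[_ yy2] _]].
move=> f; rewrite !inE => /or3P[]/eqP->; rewrite linked_set2.
- have [//|nax] := boolP (e a x); have [//|nay] := boolP (e a y).
  have c1F : ~~ e a u && ~~ e a y1 = false.
    by apply: contraNF nxy1 => /andP[_ nay1]; apply: (@alpha2_nonadj_edge a).
  have c2F : ~~ e a w && ~~ e a y2 = false.
    by apply: contraNF nyy2 => /andP[_ nay2]; apply: (@alpha2_nonadj_edge a).
  by move: anchor_z; rewrite /three_edges_anchor c1F c2F e_sym => ->.
- have [//|naw] := boolP (e a w); have [//|nay2] := boolP (e a y2).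
  have c1F : ~~ e a u && ~~ e a y1 = false.
    apply: contraNF nuw => /andP[nau _].
    by apply: (@alpha2_nonadj_edge a); rewrite // eq_sym.
  by move: anchor_z; rewrite /three_edges_anchor c1F naw nay2 e_sym => ->.
- have [//|nau] := boolP (e a u); have [//|nay1] := boolP (e a y1).
  by move: anchor_z; rewrite /three_edges_anchor nau nay1 e_sym => ->.
Qed.

Lemma three_edges_extension_le_cm (A : {set T}) :
  is_clique e A -> [disjoint A & cover three_edges] ->
  2 * #|A| + 2 * omega e + 6 <= #|T| -> 3 + #|A| <= cm e.
Proof.
move=> clA freshA le_n; have [Pcm cardP] := three_edges_connected_matching.
have AP a : a \in A -> a \notin cover three_edges by move/(disjointFr freshA) ->.
pose C a := ~: (nonadj a :|: nonadj (three_edges_anchor a) :|: A :|: cover three_edges).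
rewrite -cardP; apply: (@clique_extension_le_cm A C) => //.
- move=> a aA z; rewrite !in_setC !in_setU !negb_or => /andP[/andP[/andP[zNa _] zA] zP].
  apply/and3P; split=> //; apply: adj_of_notin_nonadj zNa.
  by apply: contraNneq zA => ->.
- move=> a aA z f + fP; rewrite !in_setC !in_setU !negb_or.
  move=> /andP[/andP[/andP[_ zNanchor] _] zP].
  exact: (three_edges_linked (AP a aA) zP zNanchor fP).
move=> a aA; rewrite /C; set U := _ :|: cover _.
have cardU : #|U| <= omega e + omega e + #|A| + 6.
  apply: (leq_trans (leq_card_setU _ _).1); apply: leq_add.
    apply: (leq_trans (leq_card_setU _ _).1); rewrite leq_add2r.
    apply: (leq_trans (leq_card_setU _ _).1).
    exact: leq_add (card_nonadj _) (card_nonadj _).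
  by have := card_cover_matching (andP Pcm).1; rewrite cardP.
have := cardsC U; move: cardU le_n; clear; lia.
Qed.

End ThreeEdges.

Lemma medium_clique_le_cm t :
  t <= omega e + 3 -> omega e < t -> 4 * t <= #|T|.+1 -> t <= cm e.
Proof.
move=> le_t lt_t le_n; have [K clK cardK] := exists_max_clique.
have [u [w [uK wK uw nuw]]] : exists u w, [/\ u \in ~: K, w \in ~: K, u != w & ~~ e u w].
  by apply: card_gt_omega_nonadj; move: (cardsC K) le_n lt_t; rewrite cardK; clear; lia.
rewrite !inE in uK wK.
set B := [set z | e u z & e w z] :\: K.
have cardB : omega e + 3 <= #|B|.
  have := card_common_nbh_outside K uw nuw; rewrite -/B cardK.
  by move: le_n lt_t; clear; lia.
have B_adj z : z \in B -> [/\ z \notin K, e u z, e w z, z != u & z != w].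
  rewrite !inE => /and3P[zK euz ewz]; split=> //.
    by apply: contraTneq euz => ->; rewrite e_irr.
  by apply: contraTneq ewz => ->; rewrite e_irr.
have [x [y [y1 [y2 [[xB yB y1B y2B] [exy nxy1 nyy2] [xy1 xy2 yy1 yy2 y1y2]]]]]] :=
  edge_with_nonadj_ends cardB.
have [xK eux ewx xu xw] := B_adj x xB; have [yK _ _ yu yw] := B_adj y yB.
have [y1K euy1 _ y1u y1w] := B_adj y1 y1B; have [y2K euy2 ewy2 y2u y2w] := B_adj y2 y2B.
have fresh_wy2 : [disjoint [set w; y2] & [set u; y1]].
  by rewrite disjoint_set2 !inE !negb_or !(eq_sym w) (eq_sym y2 y1) uw y1w y2u y1y2.
have fresh_xy : [disjoint [set x; y] & [set w; y2] :|: [set u; y1]].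
  by rewrite disjoint_set2 !inE !negb_or xw xy2 xu xy1 yw yy2 yu yy1.
have ey2u : e y2 u by rewrite e_sym.
have exu : e x u by rewrite e_sym.
have exw : e x w by rewrite e_sym.
have [Pcm cardP] :=
  three_edges_connected_matching euy1 ewy2 exy ey2u exu exw fresh_wy2 fresh_xy.
have [le_t3 | lt3_t] := leqP t 3.
  by apply: leq_trans le_t3 _; rewrite -cardP; apply: connected_matching_le_cm.
have [A sAK cardA] : exists2 A : {set T}, A \subset K & #|A| = t - 3.
  by apply: exists_subset_card; rewrite cardK leq_subLR addnC.
suff : 3 + #|A| <= cm e by rewrite cardA subnKC // ltnW.
apply: (three_edges_extension_le_cm euy1 ewy2 exy ey2u exu exw nuw nxy1 nyy2
  fresh_wy2 fresh_xy (sub_clique sAK clK)).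
  apply: disjointWl sAK _; rewrite disjoint_sym disjoints_subset cover_three_edges.
  by rewrite !subUset !sub1set !inE xK yK uK wK y1K y2K.
by rewrite cardA; move: le_n lt_t lt3_t; clear; lia.
Qed.

End Alpha2.
End Graph.

Local Open Scope ring_scope.

Theorem corollary2p6 (T : finType) (e : rel T) (t : nat) :
  simple_graph e -> (0 < t)%N -> #|T| = (4 * t - 1)%N ->
  alpha e = 2%N -> (cm e <= t - 1)%N ->
  ((omega e)%:Z <= t%:Z - 4).
Proof.
move=> [e_sym e_irr] t_gt0 cardT alpha2 cm_le.
suff : (omega e + 4 <= t)%N by lia.
rewrite leqNgt; apply/negP => lt_t.
have le_n : (4 * t <= #|T|.+1)%N by rewrite cardT; lia.
have : (t <= cm e)%N.
  have [le_t_omega | lt_omega_t] := leqP t (omega e).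
    exact: (large_clique_le_cm e_sym e_irr alpha2 le_t_omega le_n).
  by apply: (medium_clique_le_cm e_sym e_irr alpha2 _ lt_omega_t le_n); lia.
lia.
Qed.
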